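(* Let $m\ge3$. The Terwilliger algebra $T=T(x_0)$ of the doubled Odd graph $2.O_{m+1}$ coincides with the centralizer algebra $\mathcal{A}$ of the stabilizer of $x_0$ in $\mathrm{Aut}(2.O_{m+1})$.
   Context: $S=\{1,\dots,2m+1\}$, $X=\binom{S}{m}\cup\binom{S}{m+1}$; the doubled Odd graph $2.O_{m+1}$ has vertex set $X$, two vertices adjacent iff one is a proper subset of the other, with distance $\partial$. $x_0=\{1,\dots,m\}$. $T$ is the subalgebra of complex $X\times X$ matrices generated by the adjacency matrix $A_1$ and the diagonal matrices $E^*_i$ ($0\le i\le 2m+1$) with $(y,y)$-entry $1$ iff $\partial(x_0,y)=i$. The stabilizer of $x_0$ in $\mathrm{Aut}(2.O_{m+1})$ is $G=\mathrm{Sym}(x_0)\times\mathrm{Sym}(S\setminus x_0)$ acting naturally on $X$; $\mathcal{A}$ is the set of complex $X\times X$ matrices $B$ with $B_{\sigma(y),\sigma(z)}=B_{y,z}$ for all $\sigma\in G$, $y,z\in X$. *)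

From mathcomp Require Import all_boot all_order all_algebra all_fingroup.
Unset Printing Implicit Defensive.
Import GRing.Theory Num.Theory.
Local Open Scope ring_scope.

(* The ground set S = {1,...,2m+1} is modelled by 'I_(2m+1) = {0,...,2m}. *)
Definition S (m : nat) := 'I_(m.*2.+1).

Definition Xpred (m : nat) (A : {set S m}) : bool :=
  (#|A| == m) || (#|A| == m.+1).

Definition X (m : nat) : finType := {A : {set S m} | Xpred m A}.

Definition adj (m : nat) (A B : {set S m}) : bool :=
  (A \proper B) || (B \proper A).

(* x0 = {1,...,m}, i.e. {0,...,m-1} in our labelling *)
Definition x0 (m : nat) : {set S m} := [set i : S m | (i < m)%N].

Fixpoint ball (m : nat) (k : nat) : {set {set S m}} :=
  match k with
  | 0 => [set x0 m]
  | k'.+1 => ball m k' :|: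
      [set B : {set S m} | Xpred m B && [exists A in ball m k', adj m A B]]
  end.

Definition dist (m : nat) (y : X m) (i : nat) : bool :=
  (val y \in ball m i) && ((i == 0)%N || (val y \notin ball m i.-1)).

Notation Mx C m := 'M[C]_(#|X m|).

Definition entry (C : nzRingType) (m : nat) (B : Mx C m) (y z : X m) : C :=
  B (enum_rank y) (enum_rank z).

Definition A1 (C : nzRingType) (m : nat) : Mx C m :=
  \matrix_(i, j) (adj m (val (enum_val i)) (val (enum_val j)))%:R.

Definition Estar (C : nzRingType) (m : nat) (k : nat) : Mx C m :=
  \matrix_(i, j) ((i == j) && dist m (enum_val i) k)%:R.

Inductive inT (C : nzRingType) (m : nat) : Mx C m -> Prop :=
  | inT_A1 : inT C m (A1 C m)
  | inT_E (k : nat) : (k <= m.*2.+1)%N -> inT C m (Estar C m k)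
  | inT_1 : inT C m 1%:M
  | inT_add B D : inT C m B -> inT C m D -> inT C m (B + D)
  | inT_scale (c : C) B : inT C m B -> inT C m (c *: B)
  | inT_mul B D : inT C m B -> inT C m D -> inT C m (B *m D).

Lemma act_Xpred (m : nat) (s : {perm S m}) (y : X m) : Xpred m (s @: val y).
Proof. rewrite /Xpred card_imset; [exact: (valP y) | exact: perm_inj]. Qed.

Definition actX (m : nat) (s : {perm S m}) (y : X m) : X m :=
  exist _ (s @: val y) (act_Xpred m s y).

(* G = Sym(x0) x Sym(S \ x0): permutations of S fixing x0 setwise *)
Definition inG (m : nat) (s : {perm S m}) : bool := s @: x0 m == x0 m.

Definition inCent (C : nzRingType) (m : nat) (B : Mx C m) : Prop :=
  forall s : {perm S m}, inG m s ->
    forall y z : X m, entry C m B (actX m s y) (actX m s z) = entry C m B y z.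

From Pilot Require Import Defs.
From mathcomp Require Import all_boot all_order all_algebra all_fingroup zify.

Set Implicit Arguments.
Unset Strict Implicit.
Unset Printing Implicit Defensive.
Import GRing.Theory Num.Theory.

(* A vertex Y lies at distance |x0 \ Y| + |Y \ x0| from x0, so G fixes every
   E*_i and preserves A_1: T is contained in the centralizer algebra.  The
   G-orbit of a pair (Y, Z) is determined by the two distances and by
   |(x0 \ Y) ∩ (x0 \ Z)| and |(Y \ x0) ∩ (Z \ x0)|; call the sum of the
   last two the overlap.  Walk from Y to Z, each step moving towards Z, and let
   M = E*_{i0} A_1 E*_{i1} ... A_1 E*_{ik} for its distance sequence.  M is
   nonnegative, with support the pairs joined by a walk with these distances.
   Along any walk x0 \ Y grows only on steps up from odd distance and Y \ x0
   only on steps up from even distance; the chosen walk attains both counts, so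
   the support of M is the orbit of (Y, Z) plus pairs of larger overlap.
   Eliminating orbits in order of decreasing overlap puts every G-invariant
   matrix in T. *)

Section SetDifference.
Variable T : finType.
Implicit Types (A B C : {set T}) (k : T).

Lemma cards_setD1_setD A k : #|(A :\ k) :\: A| = 0%N.
Proof. by apply/eqP; rewrite cards_eq0 setD_eq0 subD1set. Qed.

Lemma cards_setU1_setD A k : #|(k |: A) :\: A| = (k \notin A).
Proof. by move: (cardsID A (k |: A)); rewrite (setIidPr (subsetU1 _ _)) cardsU1; lia. Qed.

Lemma card_setD_between A B C : A :&: C \subset B -> B \subset A :|: C ->
  #|C :\: A| = (#|B :\: A| + #|C :\: B|)%N.
Proof.
move=> /subsetP sACB /subsetP sBAC; rewrite -(cardsID B (C :\: A)).
congr (_ + _)%N; apply: eq_card => u; move: (sACB u) (sBAC u) => /implyP + /implyP;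
  by rewrite !inE; case: (u \in A); case: (u \in B); case: (u \in C).
Qed.

Lemma card_setD_triangle A B C : (#|C :\: A| <= #|B :\: A| + #|C :\: B|)%N.
Proof.
apply: leq_trans (leq_card_setU (B :\: A) (C :\: B)); apply: subset_leq_card.
by apply/subsetP => u; rewrite !inE; case: (u \in A); case: (u \in B); case: (u \in C).
Qed.

End SetDifference.

Section Layers.
Variables (T : finType) (m : nat).
Implicit Types (Y Z : {set T}) (k : T).

Definition in_layers Y := (#|Y| == m) || (#|Y| == m.+1).

Definition nested Y Z := (Y \proper Z) || (Z \proper Y).

Lemma nested_layers Y Z : in_layers Y -> in_layers Z -> nested Y Z ->
  (#|Y| = m /\ exists2 k, k \notin Y & Z = k |: Y) \/
  (#|Y| = m.+1 /\ exists2 k, k \in Y & Z = Y :\ k).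
Proof.
rewrite /in_layers => hY hZ /orP[] /[dup] /proper_card ltc /properP[sub [k kin kout]].
- left; split; first lia.
  exists k => //; apply/eqP; rewrite eq_sym eqEcard subUset sub1set kin sub.
  by rewrite cardsU1 kout; lia.
- right; split; first lia.
  exists k => //; apply/eqP; rewrite eqEcard subsetD1 sub kout.
  by move: (cardsD1 k Y); rewrite kin; lia.
Qed.

Lemma exists_nested_between Y Z : in_layers Y -> in_layers Z -> Y != Z ->
  exists2 Y', in_layers Y' & [/\ nested Y Y', Y :&: Z \subset Y' & Y' \subset Y :|: Z].
Proof.
rewrite /in_layers => hY hZ neYZ; case/orP: (hY) => /eqP cY.
- have /subsetPn[k kZ kY] : ~~ (Z \subset Y).
    by apply: contra neYZ => sZY; rewrite eq_sym eqEcard sZY; lia.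
  exists (k |: Y); first by rewrite cardsU1 kY cY eqxx orbT.
  split; first by rewrite /nested properUr ?sub1set.
    exact: subset_trans (subsetIl _ _) (subsetU1 _ _).
  by rewrite subUset sub1set inE kZ orbT subsetUl.
- have /subsetPn[k kY kZ] : ~~ (Y \subset Z).
    by apply: contra neYZ => sYZ; rewrite eqEcard sYZ; lia.
  exists (Y :\ k); first by move: (cardsD1 k Y); rewrite kY cY => /= [[->]]; rewrite eqxx.
  split; first by rewrite /nested properD1 ?orbT.
    by rewrite subsetD1 subsetIl inE (negbTE kZ) andbF.
  exact: subset_trans (subD1set _ _) (subsetUl _ _).
Qed.

End Layers.

(* From odd distance (|Y| = m + 1) a step deletes a point, from even distance
   it adds one; the step goes up exactly when it enlarges [missing], resp.
   [extra] (see [card_missing_step] and [card_extra_step]). *)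
Definition up_odd (i j : nat) : nat := odd i && (j == i.+1).
Definition up_even (i j : nat) : nat := ~~ odd i && (j == i.+1).

Lemma up_odd_succ i : up_odd i i.+1 = odd i.
Proof. by rewrite /up_odd eqxx andbT. Qed.

Lemma up_even_succ i : up_even i i.+1 = ~~ odd i.
Proof. by rewrite /up_even eqxx andbT. Qed.

Lemma up_odd_pred i : up_odd i.+1 i = 0%N.
Proof. by rewrite /up_odd ltn_eqF ?andbF. Qed.

Lemma up_even_pred i : up_even i.+1 i = 0%N.
Proof. by rewrite /up_even ltn_eqF ?andbF. Qed.

Section Levels.
Variables (T : finType) (m : nat) (x0 : {set T}).
Hypothesis card_x0 : #|x0| = m.
Implicit Types (Y Z : {set T}) (k : T).
Local Notation in_layers := (in_layers m).

Definition missing Y := x0 :\: Y.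
Definition extra Y := Y :\: x0.
Definition level Y := (#|missing Y| + #|extra Y|)%N.

Lemma in_layers_cards Y : in_layers Y ->
  (#|Y| = m /\ #|extra Y| = #|missing Y|) \/
  (#|Y| = m.+1 /\ #|extra Y| = #|missing Y|.+1).
Proof.
have := cardsID x0 Y; have := cardsID Y x0.
rewrite setIC /missing /extra card_x0 => eY ex0 /orP[] /eqP cY; lia.
Qed.

Lemma odd_level Y : in_layers Y -> odd (level Y) = (#|Y| == m.+1).
Proof.
rewrite /level => /in_layers_cards[[-> ->]|[-> ->]].
  by rewrite addnn odd_double ltn_eqF.
by rewrite addnS addnn /= odd_double eqxx.
Qed.

Lemma level_eq_cards Y Z : in_layers Y -> in_layers Z -> level Y = level Z ->
  #|missing Y| = #|missing Z| /\ #|extra Y| = #|extra Z|.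
Proof. by rewrite /level => /in_layers_cards hY /in_layers_cards hZ; lia. Qed.

Lemma level_eq0 Y : (level Y == 0%N) = (Y == x0).
Proof. by rewrite /level addn_eq0 !cards_eq0 !setD_eq0 eq_sym eqEsubset. Qed.

Lemma level_le_card Y : (level Y <= #|T|)%N.
Proof.
rewrite /level -(cardsC x0) leq_add ?subset_leq_card ?subsetDl //.
by apply/subsetP => u; rewrite !inE => /andP[].
Qed.

Lemma missing_setU1 k Y : missing (k |: Y) = missing Y :\ k.
Proof. by rewrite /missing setDDl setUC. Qed.

Lemma extra_setD1 k Y : extra (Y :\ k) = extra Y :\ k.
Proof. by rewrite /extra !setDDl setUC. Qed.

Lemma missing_setD1 k Y :
  missing (Y :\ k) = if k \in x0 then k |: missing Y else missing Y.
Proof.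
apply/setP => u; case: ifP => kx; rewrite !inE;
  by case: (eqVneq u k) => [->|]; rewrite ?kx ?andbF.
Qed.

Lemma extra_setU1 k Y :
  extra (k |: Y) = if k \in x0 then extra Y else k |: extra Y.
Proof.
apply/setP => u; case: ifP => kx; rewrite !inE;
  by case: (eqVneq u k) => [->|]; rewrite ?kx.
Qed.

Lemma level_setU1_in k Y : k \in x0 -> k \notin Y -> (level (k |: Y)).+1 = level Y.
Proof.
move=> kx kY; rewrite /level missing_setU1 extra_setU1 kx.
by move: (cardsD1 k (missing Y)); rewrite !inE kx kY; lia.
Qed.

Lemma level_setU1_out k Y : k \notin x0 -> k \notin Y -> level (k |: Y) = (level Y).+1.
Proof.
move=> kx kY; rewrite /level missing_setU1 extra_setU1 (negbTE kx) cardsU1.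
by move: (cardsD1 k (missing Y)); rewrite !inE (negbTE kx) (negbTE kY) /=; lia.
Qed.

Lemma level_setD1_in k Y : k \in x0 -> k \in Y -> level (Y :\ k) = (level Y).+1.
Proof.
move=> kx kY; rewrite /level missing_setD1 extra_setD1 kx cardsU1.
by move: (cardsD1 k (extra Y)); rewrite !inE kx kY /=; lia.
Qed.

Lemma level_setD1_out k Y : k \notin x0 -> k \in Y -> (level (Y :\ k)).+1 = level Y.
Proof.
move=> kx kY; rewrite /level missing_setD1 extra_setD1 (negbTE kx).
by move: (cardsD1 k (extra Y)); rewrite !inE kx kY; lia.
Qed.

Lemma level_nested Y Z : in_layers Y -> in_layers Z -> nested Y Z ->
  level Z = (level Y).+1 \/ level Y = (level Z).+1.
Proof.
move=> hY hZ /(nested_layers hY hZ)[[_ [k kY ->]]|[_ [k kY ->]]];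
  have [kx|kx] := boolP (k \in x0).
- by right; rewrite level_setU1_in.
- by left; rewrite level_setU1_out.
- by left; rewrite level_setD1_in.
- by right; rewrite level_setD1_out.
Qed.

Lemma exists_nested_level_pred Y : in_layers Y -> (0 < level Y)%N ->
  exists2 Z, in_layers Z & nested Z Y /\ (level Z).+1 = level Y.
Proof.
move=> hY; rewrite /level; case/in_layers_cards: (hY) => [[cY ce]|[cY ce]] lvl_gt0.
- have /card_gt0P[k] : (0 < #|missing Y|)%N by lia.
  rewrite !inE => /andP[kY kx]; exists (k |: Y).
    by rewrite /in_layers cardsU1 kY cY eqxx orbT.
  by rewrite /nested properUr ?orbT ?sub1set // level_setU1_in.
- have /card_gt0P[k] : (0 < #|extra Y|)%N by lia.
  rewrite !inE => /andP[kx kY]; exists (Y :\ k).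
    by rewrite /in_layers; move: (cardsD1 k Y); rewrite kY cY => /= [[->]]; rewrite eqxx.
  by rewrite /nested properD1 // level_setD1_out.
Qed.

Lemma card_missing_step Y Z : in_layers Y -> in_layers Z -> nested Y Z ->
  #|missing Z :\: missing Y| = up_odd (level Y) (level Z).
Proof.
move=> hY hZ /(nested_layers hY hZ)[[cY [k kY ->]]|[cY [k kY ->]]];
  have := odd_level hY; rewrite cY ?eqxx ?ltn_eqF // => oddY;
  have [kx|kx] := boolP (k \in x0).
- by rewrite -(level_setU1_in kx kY) up_odd_pred missing_setU1 cards_setD1_setD.
- by rewrite level_setU1_out // up_odd_succ oddY missing_setU1 cards_setD1_setD.
- by rewrite level_setD1_in // up_odd_succ oddY missing_setD1 kx cards_setU1_setD !inE kY.
- by rewrite -(level_setD1_out kx kY) up_odd_pred missing_setD1 (negbTE kx) setDv cards0.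
Qed.

Lemma card_extra_step Y Z : in_layers Y -> in_layers Z -> nested Y Z ->
  #|extra Z :\: extra Y| = up_even (level Y) (level Z).
Proof.
move=> hY hZ /(nested_layers hY hZ)[[cY [k kY ->]]|[cY [k kY ->]]];
  have := odd_level hY; rewrite cY ?eqxx ?ltn_eqF // => oddY;
  have [kx|kx] := boolP (k \in x0).
- by rewrite -(level_setU1_in kx kY) up_even_pred extra_setU1 kx setDv cards0.
- rewrite level_setU1_out // up_even_succ oddY extra_setU1 (negbTE kx).
  by rewrite cards_setU1_setD !inE (negbTE kY) andbF.
- by rewrite level_setD1_in // up_even_succ oddY extra_setD1 cards_setD1_setD.
- by rewrite -(level_setD1_out kx kY) up_even_pred extra_setD1 cards_setD1_setD.
Qed.

Lemma card_missing_between Y Y' Z : Y :&: Z \subset Y' -> Y' \subset Y :|: Z ->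
  #|missing Z :\: missing Y| =
    (#|missing Y' :\: missing Y| + #|missing Z :\: missing Y'|)%N.
Proof.
move=> /subsetP sYZ /subsetP sY'; apply: card_setD_between; apply/subsetP => u;
  move: (sYZ u) (sY' u) => /implyP + /implyP; rewrite !inE;
  by case: (u \in x0); case: (u \in Y); case: (u \in Y'); case: (u \in Z).
Qed.

Lemma card_extra_between Y Y' Z : Y :&: Z \subset Y' -> Y' \subset Y :|: Z ->
  #|extra Z :\: extra Y| = (#|extra Y' :\: extra Y| + #|extra Z :\: extra Y'|)%N.
Proof.
move=> /subsetP sYZ /subsetP sY'; apply: card_setD_between; apply/subsetP => u;
  move: (sYZ u) (sY' u) => /implyP + /implyP; rewrite !inE;
  by case: (u \in x0); case: (u \in Y); case: (u \in Y'); case: (u \in Z).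
Qed.

End Levels.

Lemma Xpred_in_layers m : Xpred m = in_layers m.
Proof. by []. Qed.

Lemma adj_nested m : adj m = @nested (S m).
Proof. by []. Qed.

Lemma X_in_layers m (y : X m) : in_layers m (val y).
Proof. exact: valP. Qed.

Lemma card_x0 m : #|x0 m| = m.
Proof.
have le_m : (m <= m.*2.+1)%N by lia.
have inj : injective (widen_ord le_m) by move=> i j [] /val_inj.
transitivity #|[set widen_ord le_m i | i : 'I_m]|; last by rewrite card_imset ?card_ord.
apply: eq_card => i; rewrite inE; apply/idP/imsetP => [lt_im|[j _ ->]].
  by exists (Ordinal lt_im) => //; apply: val_inj.
exact: (ltn_ord j).
Qed.

Lemma ball_level m k :
  ball m k = [set Y | in_layers m Y & (level (x0 m) Y <= k)%N].
Proof.
have lvl := level_nested (card_x0 m).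
elim: k => [|k IHk] /=.
  apply/setP => Y; rewrite !inE leqn0 level_eq0 andb_idl // => /eqP ->.
  by rewrite /in_layers card_x0 eqxx.
rewrite IHk Xpred_in_layers adj_nested; apply/setP => Y; rewrite !inE; apply/idP/idP.
  case/orP => [/andP[-> /leqW //]|/andP[hY /existsP[Z /andP[]]]].
  by rewrite inE hY => /andP[hZ lZ] /(lvl _ _ hZ hY); lia.
case/andP => hY lY; case: (leqP (level (x0 m) Y) k) => lt_kY; first by rewrite hY.
have [Z hZ [nZY lZ]] :=
  exists_nested_level_pred (card_x0 m) hY (leq_ltn_trans (leq0n k) lt_kY).
apply/orP; right; rewrite hY; apply/existsP; exists Z.
by rewrite inE hZ nZY -ltnS lZ lY.
Qed.

Lemma dist_level m (y : X m) i : dist m y i = (level (x0 m) (val y) == i).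
Proof.
rewrite /dist !ball_level !inE X_in_layers /=.
by case: i => [|i] /=; [rewrite andbT leqn0 | rewrite -ltnNge; apply/andP/eqP; lia].
Qed.

Section PermImage.
Variables (T : finType) (s : {perm T}).
Implicit Types Y Z : {set T}.

Lemma perm_imset_subset Y Z : (s @: Y \subset s @: Z) = (Y \subset Z).
Proof.
rewrite -!setD_eq0 -!cards_eq0 -!preim_permV -preimsetD card_preimset //.
exact: perm_inj.
Qed.

Lemma nested_perm Y Z : nested (s @: Y) (s @: Z) = nested Y Z.
Proof. by rewrite /nested !properE !perm_imset_subset. Qed.

Variable x0 : {set T}.
Hypothesis sx0 : s @: x0 = x0.

Lemma missing_perm Y : missing x0 (s @: Y) = s @: missing x0 Y.
Proof. by rewrite /missing -{1}sx0 -!preim_permV preimsetD. Qed.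

Lemma extra_perm Y : extra x0 (s @: Y) = s @: extra x0 Y.
Proof. by rewrite /extra -{1}sx0 -!preim_permV preimsetD. Qed.

Lemma level_perm Y : level x0 (s @: Y) = level x0 Y.
Proof. by rewrite /level missing_perm extra_perm !card_imset //; exact: perm_inj. Qed.

End PermImage.

Lemma exists_perm_fibres (T : finType) (K : eqType) (t t' : T -> K) :
  (forall c, #|[set k | t k == c]| = #|[set k | t' k == c]|) ->
  exists s : {perm T}, forall k, t' (s k) = t k.
Proof.
have [n] := ubnP #|[set k | t k != t' k]|; elim: n t' => // n IHn t' lt_n fib.
have [/existsP[i ti]|/existsPn agree] := boolP [exists k, t k != t' k]; last first.
  by exists 1%g => k; rewrite perm1; apply/esym/eqP/negbNE.
have [j t'j tj] : exists2 j, t' j == t i & t j != t i.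
  have /subsetPn[j] : ~~ ([set k | t' k == t i] \subset [set k | t k == t i]).
    apply/negP => sub; have /proper_card : [set k | t' k == t i] \proper [set k | t k == t i].
      by apply/properP; split=> //; exists i; rewrite !inE // eq_sym.
    by rewrite fib ltnn.
  by rewrite !inE => *; exists j.
pose t2 k := t' (tperm i j k).
have fib2 c : #|[set k | t k == c]| = #|[set k | t2 k == c]|.
  rewrite fib -(card_preimset _ (@perm_inj _ (tperm i j))).
  by apply: eq_card => k; rewrite !inE.
have [|s t2s] := IHn t2 _ fib2; last by exists (s * tperm i j)%g => k; rewrite permM -t2s.
rewrite -ltnS; apply: leq_trans lt_n; apply: proper_card; apply/properP; split.
  apply/subsetP => k; rewrite !inE /t2; case: tpermP => [->|->|] //.
  by rewrite (eqP t'j).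
by exists i; rewrite !inE // /t2 tpermL (eqP t'j) eqxx.
Qed.

Lemma venn_cards_eq (T : finType) (U P Q U' P' Q' : {set T}) :
  #|U| = #|U'| -> #|U :&: P| = #|U' :&: P'| -> #|U :&: Q| = #|U' :&: Q'| ->
  #|U :&: P :&: Q| = #|U' :&: P' :&: Q'| ->
  forall b1 b2, #|[set k in U | (k \in P) == b1 & (k \in Q) == b2]| =
                #|[set k in U' | (k \in P') == b1 & (k \in Q') == b2]|.
Proof.
have cellE (V R S : {set T}) b1 b2 : [set k in V | (k \in R) == b1 & (k \in S) == b2] =
    V :&: (if b1 then R else ~: R) :&: (if b2 then S else ~: S).
  apply/setP => k; case: b1; case: b2; rewrite !inE;
  by case: (k \in V); case: (k \in R); case: (k \in S).
have cardsIC (V R : {set T}) : #|V :&: ~: R| = (#|V| - #|V :&: R|)%N.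
  by rewrite -setDE -(cardsID R V) addKn.
move=> eU eP eQ ePQ [] [] /=; rewrite !cellE //=.
- by rewrite !cardsIC ePQ eP.
- by rewrite !(setIAC _ (~: _)) !cardsIC !(setIAC _ Q) !(setIAC _ Q') ePQ eQ.
- by rewrite !cardsIC !(setIAC _ (~: _)) !cardsIC !(setIAC _ Q) !(setIAC _ Q') ePQ eQ eP eU.
Qed.

Section Orbits.
Variables (T : finType) (m : nat) (x0 : {set T}).
Hypothesis card_x0 : #|x0| = m.
Implicit Types Y Z : {set T}.
Local Notation missing := (missing x0).
Local Notation extra := (extra x0).
Local Notation level := (level x0).

Definition orbit_key Y Z :=
  (level Y, level Z, #|missing Y :&: missing Z|, #|extra Y :&: extra Z|).

Lemma orbit_key_perm Y Z Y' Z' :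
  in_layers m Y -> in_layers m Z -> in_layers m Y' -> in_layers m Z' ->
  orbit_key Y Z = orbit_key Y' Z' ->
  exists s : {perm T}, [/\ s @: x0 = x0, s @: Y = Y' & s @: Z = Z'].
Proof.
move=> hY hZ hY' hZ' [/(level_eq_cards card_x0 hY hY')[mY eY]].
move=> /(level_eq_cards card_x0 hZ hZ')[mZ eZ] mYZ eYZ.
have missingE W : missing W = x0 :&: ~: W by rewrite /missing setDE.
have extraE W : extra W = ~: x0 :&: W by rewrite /extra setDE setIC.
have missingIE W W' : missing W :&: missing W' = x0 :&: ~: W :&: ~: W'.
  by rewrite !missingE setIACA setIid setIA.
have extraIE W W' : extra W :&: extra W' = ~: x0 :&: W :&: W'.
  by rewrite !extraE setIACA setIid setIA.
pose colour (W W' : {set T}) k := (k \in x0, k \in W, k \in W').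
have fibres c : #|[set k | colour Y Z k == c]| = #|[set k | colour Y' Z' k == c]|.
  case: c => [[[] b1] b2].
    have fibE W W' : [set k | colour W W' k == (true, b1, b2)] =
        [set k in x0 | (k \in ~: W) == ~~ b1 & (k \in ~: W') == ~~ b2].
      apply/setP => k; rewrite !inE !xpair_eqE.
      by case: (k \in x0); case: (k \in W); case: (k \in W'); case: b1; case: b2.
    by rewrite !fibE; apply: venn_cards_eq; rewrite -?missingIE -?missingE.
  have fibE W W' : [set k | colour W W' k == (false, b1, b2)] =
      [set k in ~: x0 | (k \in W) == b1 & (k \in W') == b2].
    apply/setP => k; rewrite !inE !xpair_eqE.
    by case: (k \in x0); case: (k \in W); case: (k \in W'); case: b1; case: b2.
  by rewrite !fibE; apply: venn_cards_eq; rewrite -?extraIE -?extraE.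
have [s colour_s] := exists_perm_fibres fibres.
have imsetE (W W' : {set T}) : (forall k, (s k \in W') = (k \in W)) -> s @: W = W'.
  by move=> sW; apply/setP => u; rewrite -preim_permV inE -(sW ((s^-1)%g u)) permKV.
by exists s; split; apply: imsetE => k; case: (colour_s k).
Qed.

Definition overlap Y Z := (#|missing Y :&: missing Z| + #|extra Y :&: extra Z|)%N.

Lemma orbit_key_or_overlap Y Z Y' Z' : in_layers m Z -> in_layers m Z' ->
  level Y' = level Y -> level Z' = level Z ->
  (#|missing Z' :\: missing Y'| <= #|missing Z :\: missing Y|)%N ->
  (#|extra Z' :\: extra Y'| <= #|extra Z :\: extra Y|)%N ->
  orbit_key Y' Z' = orbit_key Y Z \/ (overlap Y Z < overlap Y' Z')%N.
Proof.
move=> hZ hZ' eY eZ leM leE; have [mZ xZ] := level_eq_cards card_x0 hZ' hZ eZ.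
have := cardsID (missing Y') (missing Z'); have := cardsID (missing Y) (missing Z).
have := cardsID (extra Y') (extra Z'); have := cardsID (extra Y) (extra Z).
rewrite /orbit_key /overlap eY eZ (setIC (missing Z)) (setIC (missing Z')).
rewrite (setIC (extra Z)) (setIC (extra Z')) => cE cE' cM cM'.
have [eM|neM] := eqVneq #|missing Y' :&: missing Z'| #|missing Y :&: missing Z|.
  have [eE|neE] := eqVneq #|extra Y' :&: extra Z'| #|extra Y :&: extra Z|.
    by left; rewrite eM eE.
  by right; lia.
by right; lia.
Qed.

End Orbits.

Local Open Scope ring_scope.

Section Matrices.
Variables (C : nzRingType) (m : nat).
Local Notation entry := (entry C m).
Local Notation level y := (level (x0 m) (val y)).
Local Notation act := (Defs.actX m).
Implicit Types (B D : 'M[C]_#|X m|) (y z : X m).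

Lemma entry_mul B D y z : entry (B *m D) y z = \sum_x entry B y x * entry D x z.
Proof.
rewrite /entry mxE (reindex (@enum_rank (X m))) //.
by apply: onW_bij; exact: enum_rank_bij.
Qed.

Lemma entryD B D y z : entry (B + D) y z = entry B y z + entry D y z.
Proof. by rewrite /entry mxE. Qed.

Lemma entryZ c B y z : entry (c *: B) y z = c * entry B y z.
Proof. by rewrite /entry mxE. Qed.

Lemma entry1 y z : entry 1%:M y z = (y == z)%:R.
Proof. by rewrite /entry mxE (inj_eq enum_rank_inj). Qed.

Lemma entry_A1 y z : entry (A1 C m) y z = (nested (val y) (val z))%:R.
Proof. by rewrite /entry mxE !enum_rankK. Qed.

Lemma entry_Estar k y z :
  entry (Estar C m k) y z = ((y == z) && (level y == k))%:R.
Proof. by rewrite /entry mxE (inj_eq enum_rank_inj) enum_rankK dist_level. Qed.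

Lemma entry_Estar_mul k B y z :
  entry (Estar C m k *m B) y z = (level y == k)%:R * entry B y z.
Proof.
rewrite entry_mul (bigD1 y) //= big1 ?addr0 => [|x /negbTE nyx].
  by rewrite entry_Estar eqxx.
by rewrite entry_Estar eq_sym nyx mul0r.
Qed.

Lemma entry_A1_mul B y z :
  entry (A1 C m *m B) y z = \sum_(x | nested (val y) (val x)) entry B x z.
Proof.
rewrite entry_mul [RHS]big_mkcond; apply: eq_bigr => x _.
by rewrite entry_A1; case: nested; rewrite ?mul1r ?mul0r.
Qed.

Lemma actX_can s : cancel (act s) (act s^-1).
Proof.
move=> y; apply: val_inj; rewrite /= -imset_comp.
by under eq_imset do rewrite /= -permM mulgV perm1; rewrite imset_id.
Qed.

Lemma actX_bij s : bijective (act s).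
Proof. by exists (act s^-1); [exact: actX_can | rewrite -{2}[s]invgK; exact: actX_can]. Qed.

Lemma inT0 : inT C m 0.
Proof. by rewrite -(scale0r 1%:M); apply/inT_scale/inT_1. Qed.

Lemma inT_Estar k : inT C m (Estar C m k).
Proof.
have [le_k|lt_k] := leqP k m.*2.+1; first exact: inT_E.
suff -> : Estar C m k = 0 by exact: inT0.
apply/matrixP => a b; rewrite !mxE dist_level.
have := level_le_card (x0 m) (val (enum_val a)); rewrite card_ord => le_a.
by rewrite (ltn_eqF (leq_ltn_trans le_a lt_k)) andbF.
Qed.

Lemma inT_inCent B : inT C m B -> inCent C m B.
Proof.
have act_inj s := bij_inj (actX_bij s).
elim => {B} [|k _||B D _ IHB _ IHD|c B _ IHB|B D _ IHB _ IHD] s /eqP sx0 y z.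
- by rewrite !entry_A1 nested_perm.
- by rewrite !entry_Estar (inj_eq (act_inj s)) level_perm.
- by rewrite !entry1 (inj_eq (act_inj s)).
- by rewrite !entryD IHB ?IHD //; apply/eqP.
- by rewrite !entryZ IHB //; apply/eqP.
- rewrite !entry_mul (reindex (act s)); last exact/onW_bij/actX_bij.
  by apply: eq_bigr => x _; rewrite IHB ?IHD //; apply/eqP.
Qed.

End Matrices.

Section ClassMatrices.
Variables (R : nzRingType) (n : nat) (K : eqType) (key : 'I_n * 'I_n -> K).
Implicit Types (B : 'M[R]_n) (p q : 'I_n * 'I_n).

Definition key_invariant B := forall p q, key p = key q -> B p.1 p.2 = B q.1 q.2.

Definition class_mx (c : K) : 'M[R]_n := \matrix_(a, b) (key (a, b) == c)%:R.

Definition key_rep p := odflt p [pick q | key q == key p].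

Lemma key_rep_key p : key (key_rep p) = key p.
Proof. by rewrite /key_rep; case: pickP => [q /eqP|]. Qed.

Lemma key_rep_eq p q : key p = key q -> key_rep p = key_rep q.
Proof. by rewrite /key_rep => ->; case: pickP => // /(_ q); rewrite eqxx. Qed.

Lemma key_rep_idem p : key_rep (key_rep p) = key_rep p.
Proof. exact/key_rep_eq/key_rep_key. Qed.

Lemma key_invariant_class_sum B : key_invariant B ->
  B = \sum_(p | key_rep p == p) B p.1 p.2 *: class_mx (key p).
Proof.
move=> invB; apply/matrixP => a b; rewrite summxE (bigD1 (key_rep (a, b))) /=; last first.
  by rewrite key_rep_idem.
rewrite big1 ?addr0 => [|q /andP[/eqP rep_q ne_q]]; rewrite !mxE.
  by rewrite key_rep_key eqxx mulr1; exact: (invB (a, b) _ (esym (key_rep_key _))).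
have [kq|] := eqVneq (key (a, b)) (key q); last by rewrite mulr0.
by move: ne_q; rewrite -rep_q (key_rep_eq kq) eqxx.
Qed.

End ClassMatrices.

Section ClassElimination.
Variables (F : fieldType) (n : nat) (K : eqType) (key : 'I_n * 'I_n -> K).
Implicit Types (B M : 'M[F]_n) (p q : 'I_n * 'I_n).
Local Notation key_invariant := (key_invariant key).
Local Notation class_mx := (class_mx F key).
Local Notation key_rep := (key_rep key).

Variable P : 'M[F]_n -> Prop.
Hypotheses (P0 : P 0) (PD : forall B M, P B -> P M -> P (B + M))
  (PZ : forall c B, P B -> P (c *: B)).
Variable grade : 'I_n * 'I_n -> nat.
Hypothesis witness : forall p, exists M, [/\ P M, key_invariant M, M p.1 p.2 != 0 &
  forall q, M q.1 q.2 != 0 -> key q = key p \/ (grade p < grade q)%N].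

Lemma class_mx_in p : P (class_mx (key p)).
Proof.
have P_sum (r : seq _) (Q : pred _) G :
    (forall q, Q q -> P (G q)) -> P (\sum_(q <- r | Q q) G q).
  exact: big_ind.
(* Downward induction on [grade p]: removing its own class from the witness
   leaves a combination of classes of larger grade. *)
have [k] := ubnP (\max_q grade q - grade p)%N; elim: k p => // k IHk p lt_pk.
have [M [PM invM Mp Mq]] := witness p; set c := M p.1 p.2.
have : P (M - c *: class_mx (key p)).
  rewrite {1}(key_invariant_class_sum invM) (bigD1 (key_rep p)) ?key_rep_idem //=.
  rewrite key_rep_key (invM _ _ (key_rep_key key p)) addrAC subrr add0r.
  apply: P_sum => q /andP[/eqP rep_q ne_q].
  have [->|/Mq[kq|lt_pq]] := eqVneq (M q.1 q.2) 0.
  - by rewrite scale0r.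
  - by move: ne_q; rewrite -rep_q (key_rep_eq kq) eqxx.
  apply/PZ/IHk; have := @leq_bigmax _ grade q; have := @leq_bigmax _ grade p.
  lia.
move=> /(PZ (-1)); rewrite scaleN1r opprB => /(PD PM)/(PZ c^-1).
by rewrite addrC subrK scalerA mulVf // scale1r.
Qed.

Lemma key_invariant_in B : key_invariant B -> P B.
Proof.
move=> /key_invariant_class_sum ->; apply: big_ind => // q _.
exact/PZ/class_mx_in.
Qed.

End ClassElimination.

Section Walks.
Variables (C : numFieldType) (m : nat).
Local Notation entry := (entry C m).
Local Notation level y := (level (x0 m) (val y)).
Local Notation missing y := (missing (x0 m) (val y)).
Local Notation extra y := (extra (x0 m) (val y)).
Implicit Types (y z : X m) (w : seq nat).

Fixpoint walk_mx (i : nat) w : 'M[C]_#|X m| :=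
  if w is j :: w' then Estar C m i *m (A1 C m *m walk_mx j w') else Estar C m i.

Fixpoint has_walk (i : nat) w y z : Prop :=
  level y = i /\
  if w is j :: w' then exists2 x, nested (val y) (val x) & has_walk j w' x z else y = z.

Lemma inT_walk_mx i w : inT C m (walk_mx i w).
Proof.
elim: w i => [|j w IHw] i /=; first exact: inT_Estar.
by apply: inT_mul; [exact: inT_Estar | apply: inT_mul; [exact: inT_A1 | exact: IHw]].
Qed.

Lemma walk_mx_ge0 i w y z : 0 <= entry (walk_mx i w) y z.
Proof.
elim: w i y => [|j w IHw] i y /=; first by rewrite entry_Estar ler0n.
by rewrite entry_Estar_mul entry_A1_mul mulr_ge0 ?ler0n ?sumr_ge0.
Qed.

Lemma walk_mx_neq0 i w y z : entry (walk_mx i w) y z != 0 <-> has_walk i w y z.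
Proof.
elim: w i y => [|j w IHw] i y /=.
  rewrite entry_Estar pnatr_eq0 eqb0 negbK andbC.
  by split => [/andP[/eqP ? /eqP]|[-> ->]] //; rewrite !eqxx.
rewrite entry_Estar_mul entry_A1_mul mulf_eq0 negb_or pnatr_eq0 eqb0 negbK.
rewrite psumr_neq0 => [|x _]; last exact: walk_mx_ge0.
split => [/andP[/eqP lvl_y /hasP[x _ /andP[yx]]]|[lvl_y [x yx hw]]].
  by rewrite lt0r walk_mx_ge0 andbT => /IHw; split => //; exists x.
rewrite lvl_y eqxx; apply/hasP; exists x; first exact: mem_index_enum.
by rewrite yx lt0r walk_mx_ge0 andbT; apply/IHw.
Qed.

Lemma has_walk_bounds i w y z : has_walk i w y z ->
  [/\ level y = i, level z = last i w,
      (#|missing z :\: missing y| <= sumn (pairmap up_odd i w))%N &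
      (#|extra z :\: extra y| <= sumn (pairmap up_even i w))%N].
Proof.
elim: w i y => [|j w IHw] i y; cbn [pairmap sumn foldr last has_walk].
  by case=> <- <-; rewrite !setDv !cards0.
case=> lvl_y [x yx /IHw[lvl_x -> bm be]]; split=> //.
  apply: leq_trans (card_setD_triangle _ (missing x) _) _.
  rewrite (card_missing_step (card_x0 m) _ (X_in_layers x) yx) ?X_in_layers //.
  by rewrite lvl_y lvl_x leq_add2l.
apply: leq_trans (card_setD_triangle _ (extra x) _) _.
rewrite (card_extra_step (card_x0 m) _ (X_in_layers x) yx) ?X_in_layers //.
by rewrite lvl_y lvl_x leq_add2l.
Qed.

Lemma exists_exact_walk y z : exists w, [/\ has_walk (level y) w y z,
    sumn (pairmap up_odd (level y) w) = #|missing z :\: missing y| &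
    sumn (pairmap up_even (level y) w) = #|extra z :\: extra y|].
Proof.
have [d] := ubnP (#|val y :\: val z| + #|val z :\: val y|)%N.
elim: d y => // d IHd y lt_yz.
have [<-|ne_yz] := eqVneq y z; first by exists [::]; rewrite /= !setDv !cards0.
have ne_val : val y != val z by rewrite (inj_eq val_inj).
have [Y' hY' [nY sY' sY'']] := exists_nested_between (X_in_layers y) (X_in_layers z) ne_val.
pose x : X m := exist _ Y' hY'.
have step_gt0 : (0 < #|Y' :\: val y| + #|val y :\: Y'|)%N.
  rewrite addn_gt0 !card_gt0 !setD_eq0; move: nY; rewrite /nested !properE.
  by case/orP => /andP[_ ->]; rewrite ?orbT.
have [|w [hw em ee]] := IHd x.
  move: lt_yz; rewrite [val x]/= (card_setD_between sY' sY'').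
  rewrite (card_setD_between (A := val z) (B := Y')) ?(setIC (val z)) ?(setUC (val z)) //.
  lia.
exists (level x :: w); split => /=; first by split=> //; exists x.
  rewrite -(card_missing_step (card_x0 m) _ hY' nY) ?X_in_layers //.
  by rewrite em -card_missing_between.
rewrite -(card_extra_step (card_x0 m) _ hY' nY) ?X_in_layers //.
by rewrite ee -card_extra_between.
Qed.

Lemma exists_walk_witness y z : exists M, [/\ inT C m M, entry M y z != 0 &
  forall y' z', entry M y' z' != 0 ->
    orbit_key (x0 m) (val y') (val z') = orbit_key (x0 m) (val y) (val z) \/
    (overlap (x0 m) (val y) (val z) < overlap (x0 m) (val y') (val z'))%N].
Proof.
have [w [hw em ee]] := exists_exact_walk y z.
exists (walk_mx (level y) w); split; [exact: inT_walk_mx | exact/walk_mx_neq0 |].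
move=> y' z' /walk_mx_neq0 /has_walk_bounds[lvl_y' lvl_z' bm be].
have [_ lvl_z _ _] := has_walk_bounds hw.
apply: (orbit_key_or_overlap (card_x0 m)); rewrite ?X_in_layers ?lvl_z' ?lvl_z -?em -?ee //.
Qed.

End Walks.

Section RankIndexing.
Variable m : nat.
Implicit Types p q : 'I_#|X m| * 'I_#|X m|.

Definition rank_key p := orbit_key (x0 m) (val (enum_val p.1)) (val (enum_val p.2)).

Definition rank_overlap p := overlap (x0 m) (val (enum_val p.1)) (val (enum_val p.2)).

Lemma inCent_key_invariant (C : nzRingType) B :
  inCent C m B -> key_invariant rank_key B.
Proof.
move=> centB [a b] [a' b'] /(orbit_key_perm (card_x0 m)).
case; rewrite ?X_in_layers // => s [/eqP sx0 sa sb].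
rewrite -[a]enum_valK -[b]enum_valK -[a']enum_valK -[b']enum_valK /=.
rewrite -[LHS]/(entry C m B _ _) -[RHS]/(entry C m B _ _) -(centB s sx0).
by congr (entry C m B _ _); apply: val_inj.
Qed.

Lemma rank_witness (C : numFieldType) p : exists M, [/\ inT C m M,
  key_invariant rank_key M, M p.1 p.2 != 0 &
  forall q, M q.1 q.2 != 0 -> rank_key q = rank_key p \/ (rank_overlap p < rank_overlap q)%N].
Proof.
have [M [TM Mp Mq]] := exists_walk_witness C (enum_val p.1) (enum_val p.2).
exists M; split=> //.
- exact/inCent_key_invariant/inT_inCent.
- by move: Mp; rewrite /entry !enum_valK.
- by move=> q Mq0; apply: Mq; rewrite /entry !enum_valK.
Qed.

End RankIndexing.

Theorem theorem4p11 (C : numClosedFieldType) (m : nat) :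
  (3 <= m)%N ->
  forall B : 'M[C]_(#|X m|), inT C m B <-> inCent C m B.
Proof.
(* The argument works for every m. *)
move=> _ B; split; first exact: inT_inCent.
move=> /inCent_key_invariant; apply: (key_invariant_in (P := inT C m)).
- exact: inT0.
- exact: inT_add.
- exact: inT_scale.
- exact: rank_witness.
Qed.
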